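(* Let $F(X)=c_0+\cdots+c_{d-1}X^{d-1}+X^d\in\mathbb{Z}[X]$ be monic irreducible with fixed root $\xi$, $L=\mathbb{Q}(\xi)$ Galois of degree $d$ over $\mathbb{Q}$ with group $G$. Let $\mathbf{a}=(a_i)_{i\ge0}$ be a sequence of rational numbers with $a_{n+d}=-\sum_{k=0}^{d-1}c_ka_{n+k}$ for all $n\ge0$, and let $K$ be a conjugacy class of $G$ with characteristic function $\phi_K:G\to\mathbb{Q}$. Suppose $\Phi(\Psi(\mathbf{a}))=\phi_K$, where $\Psi(\mathbf{a})=\sum_{\sigma\in G}z_\sigma\otimes\sigma^{-1}\xi$ with $[z_\sigma]_{\sigma\in G}=P^{-1}[a_0,\dots,a_{d-1}]^t$, $P=[\sigma^{-1}(\xi^{i-1})]_{1\le i\le d,\sigma\in G}$, and $\Phi(\gamma\otimes\alpha)(\tau)=\gamma\cdot\tau(\alpha)$. Then for all but finitely many primes $p$, $a_p$ is $p$-integral and $a_p\equiv\phi_K(\mathrm{Frob}_p)\pmod p$.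
   Context: Matrices indexed by $G$ use a fixed total order on $G$. For a prime $p$ unramified in $L$, $\mathrm{Frob}_p$ is the conjugacy class of Frobenius automorphisms of primes above $p$, and $\phi_K(\mathrm{Frob}_p)$ is $1$ if this class is $K$ and $0$ otherwise. *)

From HB Require Import structures.
From mathcomp Require Import all_boot all_order all_algebra all_fingroup all_field.
From mathcomp Require Import boolp.
Set Implicit Arguments. Unset Strict Implicit. Unset Printing Implicit Defensive.
Import GRing.Theory Num.Theory.
Local Open Scope ring_scope.

Definition alg_integral (L : fieldExtType rat) (x : L) : Prop :=
  exists q : {poly int}, q \is monic /\ root (map_poly intr q) x.

(* sigma is a Frobenius element at some prime P of O_L above p:
   psi restricted to O_L is a ring morphism O_L -> k (k a finite field of
   characteristic p; its kernel is the prime P above p), and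
   sigma(x) = x^p mod P for all x in O_L. *)
Definition is_frob (L : splittingFieldType rat) (p : nat) (s : gal_of {:L}) : Prop :=
  exists (k : finFieldType) (psi : L -> k),
    [/\ p \in [pchar k],
        psi 1 = 1,
        (forall x y, alg_integral x -> alg_integral y -> psi (x + y) = psi x + psi y),
        (forall x y, alg_integral x -> alg_integral y -> psi (x * y) = psi x * psi y)
      & (forall x, alg_integral x -> psi (s x) = psi x ^+ p)].

Definition frob_set (L : splittingFieldType rat) (p : nat) : {set gal_of {:L}} :=
  [set s | `[< is_frob p s >]].

Definition p_integral (p : nat) (q : rat) : bool := ~~ ((p%:Z %| denq q)%Z).
Definition rat_cong_mod (p : nat) (q r : rat) : bool := ((p%:Z %| numq (q - r))%Z).

(* Let r_s = s^-1(xi) be the conjugates of xi.  Solving the recurrence gives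
   a_n = sum_s z_s r_s^n, and the hypothesis says sum_s z_s t(r_s) = phi_K(t).
   The z_s become algebraic integers after multiplication by a fixed integer
   D (denominators of a_0..a_(d-1) times the norm N of the Vandermonde
   determinant).  For p coprime to D we reduce modulo a prime above p: choose a
   root w of F in a finite field of characteristic p, and map an integral x,
   written N x = H(xi) with H in Z[X], to H(w) / N.  The p-th power w^p is the
   image of some conjugate s(xi), and s is a Frobenius at p.  Then
   D a_p = sum D z_s r_s^p == sum D z_s s(r_s) = D phi_K(s) modulo that prime,
   and both sides are rational integers, so the congruence holds modulo p;
   since Frobenius elements are closed under conjugation and all agree on
   phi_K, the set Frob_p equals K exactly when s lies in K. *)

From HB Require Import structures.
From mathcomp Require Import all_boot all_order all_algebra all_fingroup all_field.
From mathcomp Require Import boolp ring.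
Set Implicit Arguments. Unset Strict Implicit. Unset Printing Implicit Defensive.
Import GRing.Theory Num.Theory.
Local Open Scope ring_scope.

Section AlgIntegral.
Variable L : fieldExtType rat.
Implicit Types x y : L.

Lemma alg_integralE x : alg_integral x <-> integralOver (intr : int -> L) x.
Proof. by split=> [[q [mq rq]] | [q mq rq]]; exists q. Qed.

Lemma alg_integralD x y : alg_integral x -> alg_integral y -> alg_integral (x + y).
Proof. by move=> /alg_integralE ix /alg_integralE iy; apply/alg_integralE/integral_add. Qed.

Lemma alg_integralM x y : alg_integral x -> alg_integral y -> alg_integral (x * y).
Proof. by move=> /alg_integralE ix /alg_integralE iy; apply/alg_integralE/integral_mul. Qed.

Lemma alg_integralN x : alg_integral x -> alg_integral (- x).
Proof. by move=> /alg_integralE ix; apply/alg_integralE/integral_opp. Qed.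

Lemma alg_integralB x y : alg_integral x -> alg_integral y -> alg_integral (x - y).
Proof. by move=> ix iy; apply/alg_integralD/alg_integralN. Qed.

Lemma alg_integral_int (n : int) : alg_integral (n%:~R : L).
Proof. exact/alg_integralE/(integral_id (intr : int -> L)). Qed.

Lemma alg_integral1 : alg_integral (1 : L).
Proof. exact: (alg_integral_int 1). Qed.

Lemma alg_integral_sum (I : Type) (r : seq I) (P : pred I) (f : I -> L) :
  (forall i, P i -> alg_integral (f i)) -> alg_integral (\sum_(i <- r | P i) f i).
Proof. by apply: big_ind => //; [apply: (alg_integral_int 0) | apply: alg_integralD]. Qed.

Lemma alg_integral_prod (I : Type) (r : seq I) (P : pred I) (f : I -> L) :
  (forall i, P i -> alg_integral (f i)) -> alg_integral (\prod_(i <- r | P i) f i).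
Proof. by apply: big_ind => //; [apply: alg_integral1 | apply: alg_integralM]. Qed.

Lemma alg_integralX x n : alg_integral x -> alg_integral (x ^+ n).
Proof. by move=> ix; rewrite -(subn0 n) -prodr_const_nat; apply: alg_integral_prod. Qed.

Lemma alg_integral_det n (A : 'M[L]_n) :
  (forall i j, alg_integral (A i j)) -> alg_integral (\det A).
Proof.
move=> iA; apply: alg_integral_sum => s _; apply: alg_integralM.
  exact/alg_integralX/alg_integralN/alg_integral1.
by apply: alg_integral_prod => i _; apply: iA.
Qed.

Lemma alg_integral_adj n (A : 'M[L]_n) :
  (forall i j, alg_integral (A i j)) -> forall i j, alg_integral (\adj A i j).
Proof.
move=> iA i j; rewrite mxE; apply: alg_integralM.
  exact/alg_integralX/alg_integralN/alg_integral1.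
by apply: alg_integral_det => k l; rewrite !mxE.
Qed.

(* Transported to algC, where this is Cint_rat_Aint. *)
Lemma alg_integral_rat (r : rat) : alg_integral (r%:A : L) -> exists n : int, r = n%:~R.
Proof.
case=> q [mq rq].
have int_comp (R S : nzRingType) (f : {rmorphism R -> S}) :
    map_poly (intr : int -> S) q = map_poly f (map_poly intr q).
  by rewrite -map_poly_comp; apply: eq_map_poly => n /=; rewrite rmorph_int.
have rq_rat : root (map_poly (intr : int -> rat) q) r.
  by rewrite -(fmorph_root (in_alg L)) -int_comp.
have : ratr r \in (Aint : {pred algC}).
  apply: (@root_monic_Aint (map_poly intr q)); first by rewrite (int_comp _ _ ratr) fmorph_root.
    exact: monic_map mq.
  by apply/polyOverP => i; rewrite coef_map /= rpred_int.
move/(Cint_rat_Aint (Crat_rat r))/intrP => [n rn].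
by exists n; apply: (fmorph_inj (ratr : {rmorphism rat -> algC})); rewrite /= rn ratr_int.
Qed.

Lemma alg_integral_vline x : x \in 1%VS -> alg_integral x -> exists n : int, x = n%:~R.
Proof.
move=> /vlineP [r ->] /alg_integral_rat [n ->].
by exists n; rewrite -in_algE rmorph_int.
Qed.

End AlgIntegral.

Lemma alg_integral_gal (L : splittingFieldType rat) (s : gal_of {:L}) (x : L) :
  alg_integral x -> alg_integral (s x).
Proof.
case=> q [mq rq]; exists q; split=> //.
suff -> : map_poly (intr : int -> L) q = map_poly s (map_poly intr q) by rewrite rmorph_root.
by rewrite -map_poly_comp; apply: eq_map_poly => n /=; rewrite rmorph_int.
Qed.

Lemma size_map_poly_le (R S : nzRingType) (f : R -> S) (p : {poly R}) :
  (size (map_poly f p) <= size p)%N.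
Proof. exact: size_poly. Qed.

Definition integral_morph (L : fieldExtType rat) (k : fieldType) (psi : L -> k) :=
  [/\ psi 1 = 1,
      forall x y, alg_integral x -> alg_integral y -> psi (x + y) = psi x + psi y &
      forall x y, alg_integral x -> alg_integral y -> psi (x * y) = psi x * psi y].

Section IntegralMorph.
Variables (L : fieldExtType rat) (k : fieldType) (psi : L -> k).
Hypothesis psi_morph : integral_morph psi.

Lemma integral_morph1 : psi 1 = 1. Proof. by case: psi_morph. Qed.

Lemma integral_morphD x y : alg_integral x -> alg_integral y -> psi (x + y) = psi x + psi y.
Proof. by case: psi_morph => _ + _; apply. Qed.

Lemma integral_morphM x y : alg_integral x -> alg_integral y -> psi (x * y) = psi x * psi y.
Proof. by case: psi_morph => _ _; apply. Qed.

Lemma integral_morph0 : psi 0 = 0.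
Proof.
have := integral_morphD (alg_integral_int L 0) (alg_integral_int L 0).
by rewrite addr0 => /eqP; rewrite -subr_eq subrr eq_sym => /eqP.
Qed.

Lemma integral_morphN x : alg_integral x -> psi (- x) = - psi x.
Proof.
move=> ix; apply/eqP; rewrite -addr_eq0 -integral_morphD ?addNr ?integral_morph0 //.
exact: alg_integralN.
Qed.

Lemma integral_morphB x y : alg_integral x -> alg_integral y -> psi (x - y) = psi x - psi y.
Proof. by move=> ix iy; rewrite integral_morphD ?integral_morphN //; apply: alg_integralN. Qed.

Lemma integral_morph_nat (n : nat) : psi n%:R = n%:R.
Proof.
elim: n => [|n IHn]; first exact: integral_morph0.
rewrite -addn1 !natrD integral_morphD ?IHn ?integral_morph1 //.
  exact: (alg_integral_int L n).
exact: alg_integral1.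
Qed.

Lemma integral_morph_int (n : int) : psi n%:~R = n%:~R.
Proof.
case: n => n; first exact: integral_morph_nat.
rewrite NegzE !rmorphN integral_morphN ?integral_morph_nat //.
exact: (alg_integral_int L n.+1).
Qed.

Lemma integral_morph_sum (I : Type) (r : seq I) (P : pred I) (f : I -> L) :
  (forall i, P i -> alg_integral (f i)) ->
  psi (\sum_(i <- r | P i) f i) = \sum_(i <- r | P i) psi (f i).
Proof.
move=> If; suff [] : alg_integral (\sum_(i <- r | P i) f i) /\
    psi (\sum_(i <- r | P i) f i) = \sum_(i <- r | P i) psi (f i) by [].
apply: (big_ind2 (fun x y => alg_integral x /\ psi x = y)) => [|x1 x2 y1 y2 [i1 <-] [i2 <-]|i Pi].
- by split; [apply: (alg_integral_int L 0) | apply: integral_morph0].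
- by split; [apply: alg_integralD | apply: integral_morphD].
- by split=> //; apply: If.
Qed.

Lemma integral_morph_prod (I : Type) (r : seq I) (P : pred I) (f : I -> L) :
  (forall i, P i -> alg_integral (f i)) ->
  psi (\prod_(i <- r | P i) f i) = \prod_(i <- r | P i) psi (f i).
Proof.
move=> If; suff [] : alg_integral (\prod_(i <- r | P i) f i) /\
    psi (\prod_(i <- r | P i) f i) = \prod_(i <- r | P i) psi (f i) by [].
apply: (big_ind2 (fun x y => alg_integral x /\ psi x = y)) => [|x1 x2 y1 y2 [i1 <-] [i2 <-]|i Pi].
- by split; [apply: alg_integral1 | apply: integral_morph1].
- by split; [apply: alg_integralM | apply: integral_morphM].
- by split=> //; apply: If.
Qed.

Lemma integral_morphX x n : alg_integral x -> psi (x ^+ n) = psi x ^+ n.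
Proof.
by move=> ix; rewrite -(subn0 n) -!prodr_const_nat integral_morph_prod.
Qed.

Lemma integral_morph_horner (H : {poly int}) y : alg_integral y ->
  psi (map_poly intr H).[y] = (map_poly intr H).[psi y].
Proof.
move=> iy; rewrite !(horner_coef_wide _ (size_map_poly_le _ H)) integral_morph_sum; last first.
  by move=> i _; rewrite coef_map; apply/alg_integralM/alg_integralX/iy/alg_integral_int.
apply: eq_bigr => i _; rewrite !coef_map integral_morphM ?integral_morphX ?integral_morph_int //.
  exact: alg_integral_int.
exact: alg_integralX.
Qed.

End IntegralMorph.

Lemma numq_mul_intr (c : rat) (D u : int) :
  c * D%:~R = u%:~R -> numq c * D = u * denq c.
Proof. by move=> cD; apply: (@intr_inj rat); rewrite !intrM -cD numqE mulrAC. Qed.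

Lemma prime_dvdz_mulr (p : nat) (n D : int) : prime p -> ~~ (p%:Z %| D)%Z ->
  (p%:Z %| n * D)%Z = (p%:Z %| n)%Z.
Proof. by move=> pp pD; rewrite Gauss_dvdzl // coprimezE /= prime_coprime // -dvdzE. Qed.

Lemma p_integral_cong (p : nat) (c : rat) (D m : int) (b : nat) : prime p ->
  ~~ (p%:Z %| D)%Z -> c * D%:~R = m%:~R -> (p%:Z %| m - D * b%:Z)%Z ->
  p_integral p c && rat_cong_mod p c b%:R.
Proof.
move=> pp pD cD pm; apply/andP; split.
  apply/negP => p_den; have := coprime_num_den c.
  have : (p%:Z %| numq c)%Z by rewrite -(prime_dvdz_mulr _ pp pD) (numq_mul_intr cD) dvdz_mull.
  rewrite !dvdzE in p_den * => p_num.
  rewrite /coprime => /eqP cop.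
  have : (p %| gcdn `|numq c| `|denq c|)%N by rewrite dvdn_gcd p_num.
  by rewrite cop dvdn1 => /eqP p1; rewrite p1 in pp.
have cbD : (c - b%:R) * D%:~R = (m - D * b%:Z)%:~R.
  by rewrite mulrBl cD rmorphB rmorphM /= mulrC.
by rewrite /rat_cong_mod -(prime_dvdz_mulr _ pp pD) (numq_mul_intr cbD) dvdz_mulr.
Qed.

Lemma is_frob_conjg (L : splittingFieldType rat) (p : nat) (s t : gal_of {:L}) :
  is_frob p s -> is_frob p (s ^ t)%g.
Proof.
move=> [k [psi [pch psi1 psiD psiM psiF]]].
have tK x : (t^-1)%g (t x) = x by rewrite -galM ?memvf // mulgV gal_id.
exists k, (psi \o (t^-1)%g); split=> //=.
- by rewrite rmorph1.
- by move=> x y ix iy; rewrite rmorphD integral_morphD //; apply: alg_integral_gal.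
- by move=> x y ix iy; rewrite rmorphM integral_morphM //; apply: alg_integral_gal.
- by move=> x ix; rewrite conjgE !galM ?memvf // tK psiF //; apply: alg_integral_gal.
Qed.

Lemma mem_gal1 (L : splittingFieldType rat) (t : gal_of {:L}) : t \in 'Gal({:L} / 1%VS)%g.
Proof.
by rewrite gal_kHom ?sub1v // k1HomE; apply/ahom_inP; split=> [x y _ _|]; rewrite ?rmorphM ?rmorph1.
Qed.

Lemma exists_root_mod_p (F : {poly int}) (p : nat) : prime p -> F \is monic ->
  (1 < size F)%N -> exists (k : finFieldType) (w : k),
    p \in [pchar k] /\ (map_poly intr F).[w] = 0.
Proof.
move=> pp monicF sizeF; pose Fp := map_poly (intr : int -> 'F_p) F.
have [L' [rs Fp_rs _]] := FinSplittingFieldFor (monic_neq0 (monic_map _ monicF) : Fp != 0).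
exists (FinFieldExtType L'); have pchar_L' : p \in [pchar L'] by rewrite pchar_lalg pchar_Fp.
have FL' : map_poly (in_alg L') Fp = map_poly (intr : int -> L') F.
  by rewrite -map_poly_comp; apply: eq_map_poly => n; apply: (rmorph_int (in_alg L')).
case: rs Fp_rs => [|w rs] Fp_rs.
  move: (eqp_size Fp_rs); rewrite big_nil size_poly1 FL' size_map_poly_id0.
    by move=> size1; rewrite size1 in sizeF.
  by rewrite (monicP monicF) rmorph1 oner_neq0.
exists w; split=> //; apply/rootP.
by rewrite -FL' (eqp_root Fp_rs) root_prod_XsubC mem_head.
Qed.

Lemma horner_frobenius (k : fieldType) (p : nat) (H : {poly int}) (y : k) :
  p \in [pchar k] ->
  (map_poly intr H).[y ^+ p] = (map_poly intr H).[y] ^+ p.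
Proof.
move=> pchar_k; rewrite -!(pFrobenius_autE pchar_k) -horner_map /=; congr (_.[_]).
by rewrite -map_poly_comp; apply: eq_map_poly => n /=; rewrite pFrobenius_aut_int.
Qed.

Lemma polyOver1_int (L : fieldExtType rat) (Q : {poly int}) :
  map_poly (intr : int -> L) Q \is a polyOver 1%VS.
Proof. by apply/polyOverP => i; rewrite coef_map /= rpred_int. Qed.

Section PrimitiveElement.
Variables (L : splittingFieldType rat) (F : {poly int}) (xi : L).
Hypotheses (monicF : F \is monic) (rootF : root (map_poly intr F) xi).
Hypotheses (genL : <<1%VS; xi>>%VS = fullv) (galL : galois 1%VS {:L}).
Hypothesis dimL : \dim {:L} = (size F).-1.
Local Notation d := (size F).-1.
Local Notation G := 'Gal({:L} / 1%VS)%g.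
Local Notation Fx := (map_poly (intr : int -> L) F).

Lemma sizeF : size F = d.+1.
Proof. by rewrite prednK // lt0n size_poly_eq0 monic_neq0. Qed.

Lemma size_Fx : size Fx = size F.
Proof. by apply: size_map_poly_id0; rewrite (monicP monicF) rmorph1 oner_neq0. Qed.

Lemma card_gal : #|G| = d.
Proof. by rewrite -(galois_dim galL) dimv1 divn1 dimL. Qed.

Lemma adjoin_degree_xi : adjoin_degree 1 xi = d.
Proof. by rewrite adjoin_degreeE genL dimv1 divn1 dimL. Qed.

Lemma minPoly_xi : minPoly 1 xi = Fx.
Proof.
have Fx_monic : Fx \is monic by apply: monic_map monicF.
apply/eqP; rewrite -eqp_monic ?monic_minPoly // -dvdp_size_eqp.
  by rewrite size_minPoly adjoin_degree_xi size_Fx sizeF.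
exact: minPoly_dvdp (polyOver1_int _ F) rootF.
Qed.

Lemma root_xi_dvdF (Q : {poly int}) :
  (map_poly (intr : int -> L) Q).[xi] = 0 -> exists q, Q = q * F.
Proof.
move=> Qxi; exists (Q %/ F); rewrite {1}(Pdiv.IdomainMonic.divp_eq monicF Q).
suff -> : Q %% F = 0 by rewrite addr0.
have intrL_inj : injective (intr : int -> L).
  move=> m n eq_mn; apply: (@intr_inj rat); apply: (fmorph_inj (in_alg L)).
  by rewrite !rmorph_int.
set R := Q %% F; have szR : (size R <= d)%N.
  by rewrite -ltnS -sizeF ltn_modpN0 ?monic_neq0.
have Rxi : root (map_poly intr R) xi.
  move: Qxi; rewrite {1}(Pdiv.IdomainMonic.divp_eq monicF Q) rmorphD rmorphM /= hornerD hornerM.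
  by rewrite (rootP rootF) mulr0 add0r => /rootP.
apply: contraTeq szR => R_neq0; rewrite -ltnNge.
have := dvdp_leq _ (minPoly_dvdp (polyOver1_int _ R) Rxi).
rewrite size_minPoly adjoin_degree_xi size_map_inj_poly //; apply.
by rewrite -size_poly_eq0 size_map_inj_poly // size_poly_eq0.
Qed.

Lemma gal_eq_xi (s t : gal_of {:L}) : s xi = t xi -> s = t.
Proof.
move=> st; apply/eqP/gal_eqP => v _.
have v_xi : v \in <<1%VS; xi>>%VS by rewrite genL memvf.
have Pv := Fadjoin_polyOver 1 xi v.
rewrite -(Fadjoin_poly_eq v_xi) -!horner_map /=.
by rewrite !(fixedPoly_gal (sub1v _) (mem_gal1 _) Pv) st.
Qed.

Lemma gal_root (s : gal_of {:L}) : Fx.[s xi] = 0.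
Proof.
have -> : Fx = map_poly s Fx.
  by rewrite -map_poly_comp; apply: eq_map_poly => m /=; rewrite rmorph_int.
by rewrite horner_map (rootP rootF) rmorph0.
Qed.

Definition conj_root (j : 'I_#|G|) : L := ((enum_val j)^-1)%g xi.

Lemma conj_root_inj : injective conj_root.
Proof. by move=> j l /gal_eq_xi /invg_inj /enum_val_inj. Qed.

Lemma alg_integral_conj_root j : alg_integral (conj_root j).
Proof. by apply: alg_integral_gal; exists F. Qed.

Local Notation V := (Vandermonde #|G| (\row_j conj_root j)).

Lemma det_V_neq0 : \det V != 0.
Proof.
rewrite det_Vandermonde; apply/prodf_neq0 => i _; apply/prodf_neq0 => j ij.
by rewrite !mxE subr_eq0; apply: contraTneq ij => /conj_root_inj ->; rewrite ltnn.
Qed.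

Lemma V_unit : V \in unitmx.
Proof. by rewrite unitmxE unitfE det_V_neq0. Qed.

Lemma alg_integral_V i j : alg_integral (V i j).
Proof. by rewrite !mxE; apply/alg_integralX/alg_integral_conj_root. Qed.

Lemma root_expD (y : L) m : Fx.[y] = 0 ->
  y ^+ (m + d) = - \sum_(k < d) (F`_k)%:~R * y ^+ (m + k).
Proof.
rewrite (horner_coef_wide _ (_ : size Fx <= d.+1)%N); last by rewrite size_Fx sizeF.
rewrite big_ord_recr /= coef_map /=.
have -> : F`_d = 1 by move/monicP: monicF; rewrite /lead_coef sizeF.
rewrite rmorph1 mul1r => /eqP; rewrite addrC addr_eq0 => /eqP yd.
rewrite exprD yd mulrN mulr_sumr; congr (- _); apply: eq_bigr => k _.
by rewrite coef_map /= exprD mulrCA.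
Qed.

Definition binet_coef (a : nat -> rat) : 'cV[L]_#|G| := invmx V *m \col_(i < #|G|) (a i)%:A.

(* The initial values fix the coefficients through the Vandermonde system. *)
Lemma binet (a : nat -> rat) :
  (forall n, a (n + d)%N = - \sum_(k < d) (F`_k)%:~R * a (n + k)%N) ->
  forall n, (a n)%:A = \sum_j binet_coef a j 0 * conj_root j ^+ n.
Proof.
move=> rec; elim/ltn_ind => n IHn; case: (ltnP n d) => [n_lt_d | d_le_n].
  have n_lt_G : (n < #|G|)%N by rewrite card_gal.
  have /colP/(_ (Ordinal n_lt_G)) := mulKVmx V_unit (\col_(i < #|G|) (a i)%:A).
  by rewrite !mxE /= => <-; apply: eq_bigr => j _; rewrite !mxE mulrC.
rewrite -(subnK d_le_n) rec scaleNr scaler_suml.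
under eq_bigr => k _.
  rewrite -scalerA IHn; last by rewrite -[X in (_ < X)%N](subnK d_le_n) ltn_add2l.
  rewrite scaler_int -mulrzl; over.
under [RHS]eq_bigr => j _ do rewrite (root_expD _ (gal_root _)) mulrN mulr_sumr.
rewrite sumrN exchange_big /=; congr (- _); apply: eq_bigr => k _.
by rewrite mulr_sumr; apply: eq_bigr => j _; rewrite mulrCA.
Qed.

Lemma alg_integral_det_V : alg_integral (\det V).
Proof. exact/alg_integral_det/alg_integral_V. Qed.

Definition vdm_norm : L := galNorm 1 fullv (\det V).

Lemma vdm_norm_int : exists n : int, vdm_norm = n%:~R.
Proof.
apply: alg_integral_vline; first exact: mem_galNorm galL (memvf _).
by apply: alg_integral_prod => s _; apply/alg_integral_gal/alg_integral_det_V.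
Qed.

Definition vdm_normz : int := sval (cid vdm_norm_int).

Lemma vdm_normzE : vdm_norm = vdm_normz%:~R.
Proof. exact: svalP (cid vdm_norm_int). Qed.

Lemma vdm_normz_neq0 : vdm_normz != 0.
Proof.
apply: contra_neq det_V_neq0 => nz0; apply/eqP.
by rewrite -(galNorm_eq0 1 fullv) -/vdm_norm vdm_normzE nz0.
Qed.

Lemma vdm_norm_det_factor : exists2 w, alg_integral w & vdm_norm = \det V * w.
Proof.
exists (\prod_(s in G | s != 1%g) s (\det V)).
  by apply: alg_integral_prod => s _; apply/alg_integral_gal/alg_integral_det_V.
by rewrite /vdm_norm /galNorm (bigD1 1%g) ?group1 //= gal_id.
Qed.

(* Cramer's rule for the system expressing the conjugates of x through the
   coordinates of x in the power basis of xi. *)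
Lemma alg_integral_det_V_coord x i : alg_integral x ->
  alg_integral (\det V * (Fadjoin_poly 1 xi x)`_i).
Proof.
move=> ix; set h := Fadjoin_poly 1 xi x.
have size_h : (size h <= #|G|)%N by rewrite card_gal -adjoin_degree_xi size_Fadjoin_poly.
have [G_le_i | i_lt_G] := leqP #|G| i.
  by rewrite nth_default ?mulr0; [apply: (alg_integral_int L 0) | apply: leq_trans G_le_i].
pose c : 'rV[L]_#|G| := \row_l h`_l.
have cV j : (c *m V) 0 j = ((enum_val j)^-1)%g x.
  have x_xi : x \in <<1%VS; xi>>%VS by rewrite genL memvf.
  rewrite -(Fadjoin_poly_eq x_xi) -horner_map /= -/h.
  rewrite (fixedPoly_gal (sub1v _) (mem_gal1 _) (Fadjoin_polyOver _ _ _)).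
  by rewrite (horner_coef_wide _ size_h) !mxE; apply: eq_bigr => l _; rewrite !mxE.
have -> : \det V * h`_i = (c *m V *m \adj V) 0 (Ordinal i_lt_G).
  by rewrite -mulmxA mul_mx_adj mul_mx_scalar !mxE mulrC.
rewrite mxE; apply: alg_integral_sum => j _; rewrite cV.
exact/alg_integralM/alg_integral_adj/alg_integral_V/alg_integral_gal.
Qed.

Lemma int_coords x : alg_integral x ->
  exists H : {poly int}, (map_poly intr H).[xi] = vdm_normz%:~R * x.
Proof.
move=> ix; set h := Fadjoin_poly 1 xi x.
have coord_int i : exists n : int, vdm_norm * h`_i = n%:~R.
  apply: alg_integral_vline.
    by apply: rpredM; [apply: mem_galNorm galL (memvf _) | apply/polyOverP/Fadjoin_polyOver].
  have [w iw ->] := vdm_norm_det_factor.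
  by rewrite mulrAC mulrC; apply/alg_integralM/alg_integral_det_V_coord.
set H := \poly_(i < #|G|) sval (cid (coord_int i)); exists H.
have size_h : (size h <= #|G|)%N by rewrite card_gal -adjoin_degree_xi size_Fadjoin_poly.
have x_xi : x \in <<1%VS; xi>>%VS by rewrite genL memvf.
rewrite -vdm_normzE -(Fadjoin_poly_eq x_xi) -/h (horner_coef_wide _ size_h) mulr_sumr.
rewrite (horner_coef_wide _ (leq_trans (size_map_poly_le _ H) (size_poly _ _))).
apply: eq_bigr => i _; rewrite coef_map coef_poly ltn_ord /= -(svalP (cid (coord_int i))).
by rewrite mulrA.
Qed.

Section ReductionAtRoot.
Variables (k : finFieldType) (p : nat) (w : k).
Hypotheses (pchar_k : p \in [pchar k]) (root_w : (map_poly intr F).[w] = 0).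
Hypothesis normz_neq0 : (vdm_normz%:~R : k) != 0.

(* Reduction modulo the prime above p containing xi - w: an integral x has
   N x = H(xi) with H in Z[X] (int_coords) and goes to H(w) / N; reduceE shows
   that the choice of H does not matter. *)
Definition reduce (x : L) : k :=
  if pselect (exists H : {poly int}, (map_poly intr H).[xi] = vdm_normz%:~R * x)
    is left exH then (map_poly intr (sval (cid exH))).[w] / vdm_normz%:~R else 0.

Lemma reduceE x (H : {poly int}) (M : int) : alg_integral x ->
  (map_poly intr H).[xi] = M%:~R * x -> (M%:~R : k) != 0 ->
  reduce x = (map_poly intr H).[w] / M%:~R.
Proof.
move=> ix Hx M_neq0; rewrite /reduce; case: pselect => [exH | []]; last exact: int_coords.
have [q Fq] : exists q, M%:P * sval (cid exH) - vdm_normz%:P * H = q * F.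
  apply: root_xi_dvdF.
  rewrite rmorphB !rmorphM /= !map_polyC /= hornerD hornerN !hornerM !hornerC.
  by rewrite (svalP (cid exH)) Hx mulrCA subrr.
have := congr1 (fun Q => (map_poly (intr : int -> k) Q).[w]) Fq.
rewrite rmorphB !rmorphM /= !map_polyC /= hornerD hornerN !hornerM !hornerC root_w mulr0.
by move/eqP; rewrite subr_eq0 => /eqP eq_w; apply/eqP; rewrite eqr_div // mulrC eq_w mulrC.
Qed.

Lemma reduce_int_coords x : alg_integral x ->
  exists2 H : {poly int}, (map_poly intr H).[xi] = vdm_normz%:~R * x
                       & reduce x = (map_poly intr H).[w] / vdm_normz%:~R.
Proof. by move=> ix; have [H Hx] := int_coords ix; exists H => //; apply: reduceE. Qed.

Lemma reduce_morph : integral_morph reduce.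
Proof.
split=> [|x y ix iy|x y ix iy].
- by rewrite (@reduceE 1 1 1) ?rmorph1 ?hornerC ?divr1 ?mulr1 ?oner_neq0 //; apply: alg_integral1.
- have [Hx Hx_xi ->] := reduce_int_coords ix; have [Hy Hy_xi ->] := reduce_int_coords iy.
  rewrite (@reduceE _ (Hx + Hy) vdm_normz) ?rmorphD ?hornerD ?mulrDl //.
    exact: alg_integralD.
  by rewrite Hx_xi Hy_xi mulrDr.
- have [Hx Hx_xi ->] := reduce_int_coords ix; have [Hy Hy_xi ->] := reduce_int_coords iy.
  rewrite (@reduceE _ (Hx * Hy) (vdm_normz * vdm_normz)) ?rmorphM ?hornerM ?intrM ?mulf_div //.
  + exact: alg_integralM.
  + by rewrite Hx_xi Hy_xi; ring.
  + exact: mulf_neq0.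
Qed.

Lemma reduce_xi : reduce xi = w.
Proof.
rewrite (@reduceE _ 'X 1) ?map_polyX ?hornerX ?divr1 ?mul1r ?oner_neq0 //.
by exists F.
Qed.

(* w ^+ p is again a root of F mod p, hence the reduction of a conjugate of xi. *)
Lemma reduce_gal_xi_frobenius : exists s : gal_of {:L}, reduce (s xi) = w ^+ p.
Proof.
have ixi : alg_integral xi by exists F.
have [r [_ _ Fr]] : exists r : seq (gal_of {:L}),
    [/\ r \subset G, uniq [seq s xi | s : gal_of {:L} <- r]
       & minPoly 1 xi = \prod_(b <- [seq s xi | s : gal_of {:L} <- r]) ('X - b%:P)].
  exact: (elimT (galois_factors (sub1v _)) galL _ (memvf xi)).
have red := reduce_morph.
have : reduce Fx.[xi ^+ p] = 0.
  rewrite (integral_morph_horner red) ?(integral_morphX red) ?reduce_xi //; last first.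
    exact: alg_integralX.
  rewrite (horner_frobenius _ _ pchar_k) root_w expr0n /= eqn0Ngt prime_gt0 //.
  exact: pcharf_prime pchar_k.
rewrite -minPoly_xi Fr horner_prod big_map (integral_morph_prod red); last first.
  by move=> s _; rewrite hornerXsubC; apply/alg_integralB/alg_integral_gal/ixi/alg_integralX.
move/eqP; rewrite prodf_seq_eq0 => /hasP [s _ /=].
rewrite hornerXsubC (integral_morphB red) ?(integral_morphX red) ?reduce_xi //.
- by rewrite subr_eq0 => /eqP ->; exists s.
- exact: alg_integralX.
- exact: alg_integral_gal.
Qed.

Lemma reduce_frobenius : exists s : gal_of {:L},
  forall x, alg_integral x -> reduce (s x) = reduce x ^+ p.
Proof.
have [s s_xi] := reduce_gal_xi_frobenius; exists s => x ix.
have [H Hx ->] := reduce_int_coords ix.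
have Hsx : (map_poly intr H).[s xi] = vdm_normz%:~R * s x.
  have := congr1 s Hx; rewrite rmorphM rmorph_int -horner_map /= => <-; congr (_.[_]).
  by rewrite -map_poly_comp; apply: eq_map_poly => n /=; rewrite rmorph_int.
have isx : alg_integral (s x) := alg_integral_gal s ix.
have isxi : alg_integral (s xi) by apply: alg_integral_gal; exists F.
have red := reduce_morph.
apply: (mulfI normz_neq0).
rewrite exprMn exprVn -[(vdm_normz%:~R : k) ^+ p](pFrobenius_autE pchar_k) pFrobenius_aut_int.
rewrite mulrCA mulfV // mulr1 -(integral_morph_int red) -(integral_morphM red) //; last first.
  exact: alg_integral_int.
by rewrite -Hsx (integral_morph_horner red) // s_xi (horner_frobenius _ _ pchar_k).
Qed.

End ReductionAtRoot.

Lemma exists_frob (p : nat) : prime p -> ~~ (p%:Z %| vdm_normz)%Z ->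
  exists s : gal_of {:L}, is_frob p s.
Proof.
move=> pp p_normz.
have size_F : (1 < size F)%N.
  by rewrite sizeF ltnS -card_gal; apply/card_gt0P; exists 1%g; apply: group1.
have [k [w [pchar_k root_w]]] := exists_root_mod_p pp monicF size_F.
have normz_neq0 : (vdm_normz%:~R : k) != 0 by rewrite -(dvdz_pcharf pchar_k).
have [s frob_s] := reduce_frobenius pchar_k root_w normz_neq0.
have [red1 redD redM] := reduce_morph root_w normz_neq0.
by exists s, k, (reduce w); split.
Qed.

Section LinearRecurrence.
Variable a : nat -> rat.
Hypothesis rec_a : forall n, a (n + d)%N = - \sum_(k < d) (F`_k)%:~R * a (n + k)%N.
Variable K : {set gal_of {:L}}.
Hypothesis binet_coef_class : forall t : gal_of {:L},
  \sum_j binet_coef a j 0 * t (conj_root j) = (t \in K)%:R.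

Definition den_init : int := \prod_(i < #|G|) denq (a i).

Definition den_bound : int := vdm_normz * den_init.

Lemma den_init_mul_int (i : 'I_#|G|) : exists m : int, den_init%:~R * a i = m%:~R.
Proof.
exists (numq (a i) * \prod_(j < #|G| | j != i) denq (a j)).
by rewrite /den_init (bigD1 i) //= !intrM numqE; ring.
Qed.

Lemma den_bound_neq0 : den_bound != 0.
Proof. by rewrite mulf_neq0 ?vdm_normz_neq0 //; apply/prodf_neq0 => i _; apply: denq_neq0. Qed.

Lemma alg_integral_den_binet_coef j : alg_integral (den_bound%:~R * binet_coef a j 0).
Proof.
have [w iw norm_w] := vdm_norm_det_factor.
have -> : den_bound%:~R * binet_coef a j 0
    = w * \sum_l \adj V j l * (den_init%:~R * a l)%:A.
  have scale_int (c : rat) : (den_init%:~R * c)%:A = den_init%:~R * c%:A :> L.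
    by rewrite -!in_algE rmorphM rmorph_int.
  rewrite !mxE /invmx V_unit /den_bound intrM -vdm_normzE norm_w !mulr_sumr.
  apply: eq_bigr => l _; rewrite !mxE scale_int.
  by field; apply: det_V_neq0.
apply/alg_integralM/alg_integral_sum => // l _; apply: alg_integralM.
  exact/alg_integral_adj/alg_integral_V.
by have [m ->] := den_init_mul_int l; rewrite -in_algE rmorph_int; apply: alg_integral_int.
Qed.

Lemma den_bound_mul_int n : exists m : int, a n * den_bound%:~R = m%:~R.
Proof.
apply: (@alg_integral_rat L).
have -> : (a n * den_bound%:~R)%:A = (a n)%:A * den_bound%:~R :> L.
  by rewrite -!in_algE rmorphM rmorph_int.
rewrite (binet rec_a) mulr_suml.
apply: alg_integral_sum => j _; rewrite mulrAC [_ * den_bound%:~R]mulrC; apply: alg_integralM.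
  exact: alg_integral_den_binet_coef.
exact/alg_integralX/alg_integral_conj_root.
Qed.

(* Reducing the Binet formula for a_p modulo a prime above p, the Frobenius
   turns the p-th powers of the roots into their conjugates by s. *)
Lemma frob_congr (p : nat) (s : gal_of {:L}) (m : int) :
  is_frob p s -> a p * den_bound%:~R = m%:~R -> (p%:Z %| m - den_bound * (s \in K)%:Z)%Z.
Proof.
move=> [k [psi [pchar_k psi1 psiD psiM psi_frob]]] a_m.
have psi_morph : integral_morph psi by [].
pose c j := den_bound%:~R * binet_coef a j 0.
have m_binet : (m%:~R : L) = \sum_j c j * conj_root j ^+ p.
  rewrite -(rmorph_int (in_alg L)) -a_m rmorphM rmorph_int /= (binet rec_a) mulr_suml.
  by apply: eq_bigr => j _; rewrite /c mulrAC [_ * _%:~R]mulrC.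
have s_binet : ((den_bound * (s \in K)%:Z)%:~R : L) = \sum_j c j * s (conj_root j).
  rewrite intrM -[((s \in K)%:Z)%:~R]/((s \in K)%:R : L) -binet_coef_class mulr_sumr.
  by apply: eq_bigr => j _; rewrite mulrA.
have psi_sum f : (forall j, alg_integral (f j)) ->
    psi (\sum_j c j * f j) = \sum_j psi (c j) * psi (f j).
  have ic j : alg_integral (c j) := alg_integral_den_binet_coef j.
  move=> if_; rewrite (integral_morph_sum psi_morph) => [|j _]; last exact: alg_integralM.
  by apply: eq_bigr => j _; apply: (integral_morphM psi_morph).
have ir := alg_integral_conj_root.
rewrite (dvdz_pcharf pchar_k) rmorphB /= subr_eq0 -!(integral_morph_int psi_morph).
rewrite m_binet s_binet !psi_sum; last 2 first.
- by move=> j; apply/alg_integral_gal.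
- by move=> j; apply/alg_integralX.
by apply/eqP/eq_bigr => j _; rewrite (integral_morphX psi_morph) ?psi_frob.
Qed.

Lemma frob_memK (p : nat) (s t : gal_of {:L}) : ~~ (p%:Z %| den_bound)%Z ->
  is_frob p s -> is_frob p t -> (s \in K) = (t \in K).
Proof.
move=> p_den frob_s frob_t; have [m a_m] := den_bound_mul_int p.
have [ps pt] := (frob_congr frob_s a_m, frob_congr frob_t a_m).
apply: contraNeq p_den; rewrite (_ : den_bound = m - (m - den_bound)); last first.
  by rewrite opprB addrC subrK.
by case: (s \in K) (t \in K) ps pt => -[] //=;
  rewrite mulr0 mulr1 subr0 => p1 p0 _; rewrite rpredB.
Qed.

Hypothesis classK : K \in classes G.

Lemma frob_set_eq (p : nat) (s : gal_of {:L}) : ~~ (p%:Z %| den_bound)%Z ->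
  is_frob p s -> (frob_set L p == K) = (s \in K).
Proof.
move=> p_den frob_s; apply/eqP/idP => [<- | sK]; first by rewrite inE; apply/asboolP.
apply/setP => t; rewrite inE; apply/asboolP/idP => [frob_t | tK].
  by rewrite (frob_memK p_den frob_t frob_s).
have [_ defK] := repr_classesP classK.
have : t \in (s ^: G)%g by rewrite (class_eqP (_ : s \in repr K ^: G)%g) -defK.
by case/imsetP => u _ ->; apply: is_frob_conjg.
Qed.

Lemma recurrence_cong (p : nat) : prime p -> ~~ (p%:Z %| den_bound)%Z ->
  p_integral p (a p) && rat_cong_mod p (a p) (frob_set L p == K)%:R.
Proof.
move=> pp p_den; have [m a_m] := den_bound_mul_int p.
have [s frob_s] := exists_frob pp (contra (dvdz_mulr _) p_den).
rewrite (frob_set_eq p_den frob_s).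
exact: p_integral_cong pp p_den a_m (frob_congr frob_s a_m).
Qed.

End LinearRecurrence.
End PrimitiveElement.

Theorem mainTheorem6 (L : splittingFieldType rat) (F : {poly int}) (xi : L)
  (a : nat -> rat) (K : {set gal_of {:L}}) :
  let d := (size F).-1 in
  let G := 'Gal({:L} / 1%VS)%g in
  F \is monic ->
  irreducible_poly F ->
  root (map_poly intr F) xi ->
  <<1%VS; xi>>%VS = fullv ->
  galois 1%VS {:L} ->
  \dim {:L} = d ->
  (forall n, a (n + d)%N = - \sum_(k < d) (F`_k)%:~R * a (n + k)%N) ->
  K \in classes G ->
  let P : 'M[L]_#|G| :=
    \matrix_(i < #|G|, j < #|G|) ((enum_val j)^-1)%g (xi ^+ i) in
  let z : 'cV[L]_#|G| := invmx P *m \col_(i < #|G|) (a i)%:A in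
  (forall tau, tau \in G ->
     \sum_(j < #|G|) z j 0 * tau (((enum_val j)^-1)%g xi)
       = (tau \in K)%:R) ->
  exists S : seq nat, forall p, prime p -> p \notin S ->
    p_integral p (a p) && rat_cong_mod p (a p) (frob_set L p == K)%:R.
Proof.
(* Irreducibility of F already follows from the degree hypothesis. *)
move=> d G monicF _ rootF genL galL dimL rec_a classK P z z_class.
have binet_class (t : gal_of {:L}) :
    \sum_j binet_coef xi a j 0 * t (conj_root xi j) = (t \in K)%:R.
  have PV : P = Vandermonde #|G| (\row_j conj_root xi j).
    by apply/matrixP => i j; rewrite !mxE rmorphXn.
  by rewrite -(z_class t (mem_gal1 t)) /z PV.
pose D := den_bound monicF rootF galL a.
exists (iota 0 `|D|.+1) => p pp; rewrite mem_iota ltnS /= => D_lt_p.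
apply: (recurrence_cong genL dimL rec_a binet_class classK pp).
apply: contraL D_lt_p; rewrite dvdzE => /dvdn_leq; rewrite negbK; apply.
by rewrite absz_gt0 (den_bound_neq0 _ _ genL).
Qed.
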